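(* Fix integers $1\le L\le D\le K$. The capacity of the JPLT-II problem (single-server private linear transformation with joint privacy under Model II) with $K$ messages, demand support size $D$ and demand dimension $L$ equals $\dfrac{L}{K-D+L}$. That is, every JPLT-II protocol, over any field $\mathbb{F}_q$ and any message length $N$, has rate at most $L/(K-D+L)$, and for every prime power $q\ge K$ there is a JPLT-II protocol achieving rate exactly $L/(K-D+L)$.
   Context: Setup. Let $q$ be a prime power, $N\ge 1$ an integer, $B=N\log_2 q$, and $1\le L\le D\le K$ integers. Let $\mathbb{W}$ be the set of all $D$-element subsets of $[K]=\{1,\dots,K\}$. Let $\mathbb{V}_I$ be the set of $L\times D$ matrices over $\mathbb{F}_q$ that are MDS (every $L\times L$ submatrix is invertible), and $\mathbb{V}_{II}$ the set of $L\times D$ matrices over $\mathbb{F}_q$ of rank $L$. A server stores messages $X_1,\dots,X_K\in\mathbb{F}_q^N$ (row vectors), which are independent and uniformly distributed; $X$ denotes the $K\times N$ matrix with rows $X_1,\dots,X_K$, and for $S\subseteq[K]$, $X_S$ is the submatrix of rows indexed by $S$ (in increasing order). For $W\in\mathbb{W}$ and an $L\times D$ matrix $V$, the demand is $Z^{[W,V]}=VX_W=UX$, where the global coefficient matrix $U$ is the $L\times K$ matrix whose columns indexed by $W$ (in increasing order) are the columns of $V$ and whose other columns are zero. The demand support $W$ is uniform on $\mathbb{W}$; the coefficient matrix $V$ is uniform on $\mathbb{V}_I$ (Model I) or on $\mathbb{V}_{II}$ (Model II); $W,V,X$ are mutually independent. The server knows $K,D,L$ and these distributions but not the realizations of $W,V$.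 Protocol. The user draws private randomness $R$ independent of $(W,V,X)$ and sends a query $Q=Q^{[W,V]}$ that is a function of $(W,V,R)$; the server returns an answer $A=A^{[W,V]}$ that is a deterministic function of $(Q,X)$. Recoverability: $H(Z^{[W,V]}\mid A,Q,W,V)=0$. Joint privacy: for every realization $\mathrm{Q}$ of the query with positive probability and every $\tilde W\in\mathbb{W}$, $\Pr(W=\tilde W\mid Q=\mathrm{Q})=1/\binom{K}{D}$. A JPLT-I (resp. JPLT-II) protocol is a protocol satisfying recoverability and joint privacy under Model I (resp. Model II). The rate of a protocol is $H(Z^{[W,V]})/H(A)=LB/H(A)$. The capacity is the supremum of rates over all such protocols and all field sizes $q$ (for fixed $K,D,L$). *)

From HB Require Import structures.
From mathcomp Require Import all_boot all_order all_algebra.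
From mathcomp Require Import reals exp.
Set Implicit Arguments. Unset Strict Implicit. Unset Printing Implicit Defensive.
Import Order.TTheory GRing.Theory Num.Theory.
Local Open Scope ring_scope.

Definition prob (R : realType) (Om : finType) (P : {ffun Om -> R})
  (E : pred Om) : R := \sum_(o : Om | E o) P o.

Definition log2 (R : realType) (x : R) : R := ln x / ln 2.

Definition entropy (R : realType) (Om T : finType) (P : {ffun Om -> R})
  (X : Om -> T) : R :=
  \sum_(t : T) (let p := prob P (fun o => X o == t) in
                if p == 0 then 0 else - (p * log2 p)).

Definition cond_entropy (R : realType) (Om T S : finType) (P : {ffun Om -> R})
  (X : Om -> T) (Y : Om -> S) : R :=
  entropy P (fun o => (X o, Y o)) - entropy P Y.

Definition Wset (K D : nat) : {set {set 'I_K}} := [set w : {set 'I_K} | #|w| == D].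

Definition VsetII (F : finFieldType) (L D : nat) : {set 'M[F]_(L, D)} :=
  [set v : 'M[F]_(L, D) | \rank v == L].

(* global coefficient matrix U: the columns of U indexed by w (in increasing
   order) are the columns of v; the other columns are zero.  The column j \in w
   is the k-th element of w where k = #{l in w | l < j}. *)
Definition globalU (F : finFieldType) (K D L : nat) (w : {set 'I_K})
  (v : 'M[F]_(L, D)) : 'M[F]_(L, K) :=
  \matrix_(i < L, j < K)
     \sum_(k < D | (j \in w) && (#|[set l in w | (l < j)%N]| == k)) v i k.

(* sample space: (W, V, R, X) *)
Definition Omega (F : finFieldType) (K D L N : nat) (Rt : finType) : finType :=
  ({set 'I_K} * 'M[F]_(L, D) * Rt * 'M[F]_(K, N))%type.

Definition jointII (R : realType) (F : finFieldType) (K D L N : nat)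
  (Rt : finType) (PR : {ffun Rt -> R}) : {ffun Omega F K D L N Rt -> R} :=
  [ffun o : Omega F K D L N Rt =>
     (if o.1.1.1 \in Wset K D then (#|Wset K D|%:R)^-1 else 0)
   * (if o.1.1.2 \in VsetII F L D then (#|VsetII F L D|%:R)^-1 else 0)
   * PR o.1.2
   * (#|{: 'M[F]_(K, N)}|%:R)^-1].

Definition rvW (F : finFieldType) (K D L N : nat) (Rt : finType) (o : Omega F K D L N Rt) : {set 'I_K} := o.1.1.1.
Definition rvV (F : finFieldType) (K D L N : nat) (Rt : finType) (o : Omega F K D L N Rt) : 'M[F]_(L, D) := o.1.1.2.
Definition rvX (F : finFieldType) (K D L N : nat) (Rt : finType) (o : Omega F K D L N Rt) : 'M[F]_(K, N) := o.2.
Definition rvQ (F : finFieldType) (K D L N : nat) (Rt : finType) (Qt : finType)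
  (qf : {set 'I_K} -> 'M[F]_(L, D) -> Rt -> Qt) (o : Omega F K D L N Rt) : Qt :=
  qf o.1.1.1 o.1.1.2 o.1.2.
Definition rvA (F : finFieldType) (K D L N : nat) (Rt : finType) (Qt At : finType)
  (qf : {set 'I_K} -> 'M[F]_(L, D) -> Rt -> Qt) (af : Qt -> 'M[F]_(K, N) -> At)
  (o : Omega F K D L N Rt) : At :=
  af (rvQ qf o) o.2.
(* demand Z = V X_W = U X *)
Definition rvZ (F : finFieldType) (K D L N : nat) (Rt : finType) (o : Omega F K D L N Rt) : 'M[F]_(L, N) :=
  globalU o.1.1.1 o.1.1.2 *m o.2.

(* A JPLT-II protocol: private randomness R with distribution PR on a finite
   type Rt, query Q = qf(W,V,R), answer A = af(Q,X). *)
Definition is_JPLT_II (R : realType) (F : finFieldType) (K D L N : nat)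
  (Rt Qt At : finType) (PR : {ffun Rt -> R})
  (qf : {set 'I_K} -> 'M[F]_(L, D) -> Rt -> Qt)
  (af : Qt -> 'M[F]_(K, N) -> At) : Prop :=
  let P := @jointII R F K D L N Rt PR in
  [/\ (forall r, 0 <= PR r), \sum_(r : Rt) PR r = 1,
      cond_entropy P (@rvZ F K D L N Rt)
        (fun o => (rvA qf af o, rvQ qf o, rvW o, rvV o)) = 0 &
      forall (Q0 : Qt), 0 < prob P (fun o => rvQ qf o == Q0) ->
      forall (w0 : {set 'I_K}), w0 \in Wset K D ->
        prob P (fun o => (rvW o == w0) && (rvQ qf o == Q0))
          / prob P (fun o => rvQ qf o == Q0) = ('C(K, D)%:R)^-1 ].

(* rate = L B / H(A), with B = N log2 q *)
Definition rateII (R : realType) (F : finFieldType) (K D L N : nat)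
  (Rt Qt At : finType) (PR : {ffun Rt -> R})
  (qf : {set 'I_K} -> 'M[F]_(L, D) -> Rt -> Qt)
  (af : Qt -> 'M[F]_(K, N) -> At) : R :=
  (L * N)%:R * log2 (#|F|%:R : R) / entropy (@jointII R F K D L N Rt PR) (rvA qf af).

From HB Require Import structures.
From mathcomp Require Import all_boot all_order all_algebra.
From mathcomp Require Import reals exp.
From mathcomp Require Import zify ring.
Set Implicit Arguments. Unset Strict Implicit. Unset Printing Implicit Defensive.
Import Order.TTheory GRing.Theory Num.Theory.
Local Open Scope ring_scope.

(* Converse.  Fix a query value Q0 that occurs.  By joint privacy, every
   D-subset w of [K] occurs with Q0 together with some rank-L demand, whose
   global matrix U has rank L and is supported on w.  By recoverability, the
   answer to Q0 determines U X for all these U, hence determines S X where S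
   is their row span.  S meets every D-dimensional coordinate subspace in
   dimension >= L, so dim S >= r (a greedy covering argument).  Thus every
   answer value has probability <= q^(-rN), whence H(A) >= r N log q.

   Achievability.  The query is a uniformly random full-rank r x K matrix G
   whose row space contains the demand rows, answered by A = G X (uniform, so
   H(A) = r N log q).  A GL_D-symmetry argument shows: if G is uniform and,
   given G, the demand on a support w is uniform among the compatible ones,
   then that demand is uniform over all rank-L matrices.  Reversing this
   conditioning gives G a law given (W, V) under which G is uniform and
   independent of W.  The construction works over every finite field. *)

Section CoordinateSpaces.
Variable F : fieldType.

Definition coord_space K (w : {set 'I_K}) : 'M[F]_K :=
  (\sum_(j in w) <<delta_mx 0 j : 'rV[F]_K>>)%MS.

Lemma rank_coord_space K (w : {set 'I_K}) : (\rank (coord_space w) <= #|w|)%N.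
Proof.
rewrite /coord_space -sum1_card.
apply: (big_ind2 (fun (x : 'M[F]_K) (n : nat) => (\rank x <= n)%N)).
- by rewrite mxrank0.
- move=> x1 n1 x2 n2 h1 h2.
  exact: leq_trans (mxrank_adds_leqif x1 x2) (leq_add h1 h2).
- by move=> j _; rewrite mxrank_gen mxrank_delta.
Qed.

Lemma unit_coord_space K (w : {set 'I_K}) j :
  j \in w -> ((delta_mx 0 j : 'rV[F]_K) <= coord_space w)%MS.
Proof. by move=> jw; apply: (sumsmx_sup j) => //; rewrite genmxE. Qed.

Lemma coord_spaceS K (w w' : {set 'I_K}) :
  w \subset w' -> (coord_space w <= coord_space w')%MS.
Proof.
move=> sww'; apply/sumsmx_subP => j jw.
by rewrite genmxE unit_coord_space // (subsetP sww').
Qed.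

Lemma sub_coord_space m K (w : {set 'I_K}) (U : 'M[F]_(m, K)) :
  (forall i j, j \notin w -> U i j = 0) -> (U <= coord_space w)%MS.
Proof.
move=> hU; apply/row_subP => i; rewrite (row_sum_delta (row i U)).
apply: summx_sub => j _; case: (boolP (j \in w)) => jw.
  by apply: scalemx_sub; apply: unit_coord_space.
by rewrite mxE hU // scale0r sub0mx.
Qed.

Lemma coord_space_fill K (S : 'M[F]_K) (w : {set 'I_K}) :
  (forall j, j \notin w -> ((delta_mx 0 j : 'rV[F]_K) <= S + coord_space w)%MS) ->
  \rank (S + coord_space w) = K.
Proof.
move=> hout; apply/eqP; rewrite -/(row_full _) -sub1mx; apply/row_subP => j; rewrite row1.
case: (boolP (j \in w)) => jw; last exact: hout.
exact: submx_trans (unit_coord_space jw) (addsmxSr _ _).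
Qed.

Lemma extend_coord_set K (S : 'M[F]_K) m : (m <= K)%N ->
  exists w : {set 'I_K},
    #|w| = m /\ (minn K (\rank S + m) <= \rank (S + coord_space w))%N.
Proof.
elim: m => [|m IH] hm.
  exists set0; split; first by rewrite cards0.
  by rewrite addn0 (leq_trans (geq_minr _ _)) // mxrankS // addsmxSl.
have [w [cw hw]] := IH (ltnW hm).
have grow j : (S + coord_space w <= S + coord_space (j |: w))%MS.
  by rewrite addsmxS // coord_spaceS // subsetUr.
(* Either some e_j, j outside w, escapes S + E_w and adding j raises the rank,
   or S + E_w is already everything and any new j will do. *)
case: (pickP (fun j => (j \notin w) &&
    ~~ ((delta_mx 0 j : 'rV[F]_K) <= S + coord_space w)%MS)) => [j /andP [jw nj]|none].
  exists (j |: w); split; first by rewrite cardsU1 jw cw.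
  have : (S + coord_space w < S + coord_space (j |: w))%MS.
    rewrite ltmxE grow /=; apply: contra nj => h; apply: submx_trans h.
    exact: submx_trans (unit_coord_space (setU11 j w)) (addsmxSr _ _).
  rewrite ltmxErank => /andP [_ /(leq_trans _)]; apply.
  by move: hw; rewrite /minn; case: ifP; case: ifP => //; lia.
have full : \rank (S + coord_space w) = K.
  by apply: coord_space_fill => j jw; move: (none j); rewrite jw => /negbFE.
have /set0Pn [j] : ~: w != set0.
  by rewrite -card_gt0; have := cardsC w; rewrite card_ord; lia.
rewrite inE => jw; exists (j |: w); split; first by rewrite cardsU1 jw cw.
by rewrite (leq_trans (geq_minl _ _)) // -{1}full mxrankS.
Qed.

Lemma covering_rank_bound K D L (S : 'M[F]_K) :
  (1 <= L)%N -> (D <= K)%N ->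
  (forall w : {set 'I_K}, #|w| = D -> (L <= \rank (S :&: coord_space w))%N) ->
  (K - D + L <= \rank S)%N.
Proof.
move=> hL hDK hS; rewrite leqNgt; apply/negP => lt.
have [w [cw hw]] := extend_coord_set S hDK.
have hcap := hS w cw.
have hsum := mxrank_sum_cap S (coord_space w).
have hw' := rank_coord_space w; rewrite cw in hw'.
by move: hw; rewrite /minn; case: ifP => _ hw; lia.
Qed.

End CoordinateSpaces.

Section SupportEmbedding.
Variable F : fieldType.

Definition pos_in K (w : {set 'I_K}) (j : 'I_K) : nat := #|[set l in w | (l < j)%N]|.

Lemma pos_in_lt K (w : {set 'I_K}) j : j \in w -> (pos_in w j < #|w|)%N.
Proof.
move=> jw; apply: proper_card; apply/properP; split.
  by apply/subsetP => l; rewrite inE => /andP [].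
by exists j => //; rewrite inE ltnn andbF.
Qed.

Lemma pos_in_mono K (w : {set 'I_K}) j j' :
  j \in w -> j' \in w -> (j < j')%N -> (pos_in w j < pos_in w j')%N.
Proof.
move=> jw j'w ljj; apply: proper_card; apply/properP; split.
  by apply/subsetP => l; rewrite !inE => /andP [-> /= h]; apply: ltn_trans h ljj.
by exists j; rewrite !inE ?jw ?ljj // ltnn andbF.
Qed.

Lemma pos_in_inj K (w : {set 'I_K}) : {in w &, injective (pos_in w)}.
Proof.
move=> j j' jw j'w e; apply: val_inj => /=.
case: (ltngtP j j') => // h.
  by have := pos_in_mono jw j'w h; rewrite e ltnn.
by have := pos_in_mono j'w jw h; rewrite e ltnn.
Qed.

Lemma pos_in_onto K (w : {set 'I_K}) k : (k < #|w|)%N ->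
  exists2 j, j \in w & pos_in w j = k.
Proof.
move=> kw; set s := map (pos_in w) (enum w).
have us : uniq s.
  by rewrite map_inj_in_uniq ?enum_uniq // => j j'; rewrite !mem_enum; apply: pos_in_inj.
have ss : {subset s <= iota 0 #|w|}.
  by move=> x /mapP [j]; rewrite mem_enum => jw ->; rewrite mem_iota add0n pos_in_lt.
have szs : (size (iota 0 #|w|) <= size s)%N by rewrite size_iota size_map -cardE.
have [_ es] := uniq_min_size us ss szs.
have : k \in s by rewrite es mem_iota add0n kw.
by case/mapP => j; rewrite mem_enum => jw ->; exists j.
Qed.

Lemma card_pos_in K (w : {set 'I_K}) (k : nat) : (k < #|w|)%N ->
  #|[set j in w | pos_in w j == k]| = 1%N.
Proof.
move=> kw; have [j0 j0w e0] := pos_in_onto kw.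
apply/eqP/cards1P; exists j0; apply/setP => j; rewrite !inE.
apply/andP/eqP => [[jw /eqP e]|->]; last by rewrite j0w e0.
by apply: pos_in_inj jw j0w _; rewrite e e0.
Qed.

(* The D x K 0/1 matrix sending the k-th coordinate of F^D to the k-th
   element of w; when #|w| = D, v *m embed_mx D w places the columns of v
   at the positions of w. *)
Definition embed_mx K D (w : {set 'I_K}) : 'M[F]_(D, K) :=
  \matrix_(k < D, j < K) (((j \in w) && (pos_in w j == k))%:R).

Lemma embed_mx_coord_space K D (w : {set 'I_K}) : (embed_mx D w <= coord_space F w)%MS.
Proof. by apply: sub_coord_space => i j jw; rewrite mxE (negbTE jw). Qed.

Lemma embed_mx_trmx K D (w : {set 'I_K}) :
  #|w| = D -> embed_mx D w *m (embed_mx D w)^T = 1%:M.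
Proof.
move=> cw; apply/matrixP => k k'; rewrite !mxE.
under eq_bigr => j _ do rewrite !mxE -natrM mulnb.
case: (eqVneq k k') => [<-|ne].
  have kw : (k < #|w|)%N by rewrite cw.
  under eq_bigr => j _ do rewrite andbb.
  rewrite -[RHS]/((1%N)%:R) -(card_pos_in kw) -sum1_card natr_sum [RHS]big_mkcond /=.
  by apply: eq_bigr => j _; rewrite inE; case: (_ && _).
rewrite big1 // => j _.
case: (j \in w) => //=; case: (eqVneq (pos_in w j) k) => //= e.
by case: (eqVneq (pos_in w j) k') => //= e'; move/eqP: ne; case; apply: val_inj; rewrite /= -e e'.
Qed.

Lemma embed_mx_free K D (w : {set 'I_K}) : #|w| = D -> row_free (embed_mx D w).
Proof. by move=> cw; apply/row_freeP; exists (embed_mx D w)^T; apply: embed_mx_trmx. Qed.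

End SupportEmbedding.

Section LiftGL.
Variables (F : fieldType) (K D : nat) (w : {set 'I_K}).
Hypothesis cw : #|w| = D.
Local Notation E := (embed_mx F D w).
Local Notation Pc := (1%:M - E^T *m E).

(* Extension of g in GL_D to GL_K: act by g on the coordinates in w and by the
   identity elsewhere; Pc is the projection onto the coordinates outside w. *)
Definition lift_mx (g : 'M[F]_D) : 'M[F]_K := E^T *m g *m E + Pc.

Lemma embed_trmx : E *m E^T = 1%:M. Proof. exact: embed_mx_trmx. Qed.

Lemma embed_proj : E *m Pc = 0.
Proof. by rewrite mulmxBr mulmx1 mulmxA embed_trmx mul1mx subrr. Qed.

Lemma proj_embed : Pc *m E^T = 0.
Proof. by rewrite mulmxBl mul1mx -mulmxA embed_trmx mulmx1 subrr. Qed.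

Lemma proj_idem : Pc *m Pc = Pc.
Proof. by rewrite mulmxBl mul1mx -mulmxA embed_proj mulmx0 subr0. Qed.

Lemma embed_lift g : E *m lift_mx g = g *m E.
Proof.
by rewrite /lift_mx mulmxDr embed_proj addr0 !mulmxA embed_trmx mul1mx.
Qed.

Lemma lift_mxM g h : lift_mx g *m lift_mx h = lift_mx (g *m h).
Proof.
have gh : E^T *m g *m E *m (E^T *m h *m E) = E^T *m (g *m h) *m E.
  by rewrite !mulmxA -(mulmxA (E^T *m g)) embed_trmx mulmx1.
have gP : E^T *m g *m E *m Pc = 0 by rewrite -mulmxA embed_proj mulmx0.
have Ph : Pc *m (E^T *m h *m E) = 0 by rewrite !mulmxA proj_embed !mul0mx.
by rewrite /lift_mx mulmxDl !(mulmxDr _ (E^T *m h *m E)) gh gP Ph proj_idem addr0 add0r.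
Qed.

Lemma lift_mx1 : lift_mx 1%:M = 1%:M.
Proof. by rewrite /lift_mx mulmx1 addrC subrK. Qed.

Lemma lift_mx_unit g : g \in unitmx -> lift_mx g \in unitmx.
Proof.
move=> gu; have [] // := @mulmx1_unit _ _ (lift_mx g) (lift_mx (invmx g)).
by rewrite lift_mxM mulmxV // lift_mx1.
Qed.

(* A subspace of F^K of dimension at least K - D + L meets E_w in dimension
   at least L, so it contains the global matrix of some rank-L demand on w. *)
Lemma exists_embedded_rank L r (G : 'M[F]_(r, K)) :
  (K - D + L <= \rank G)%N ->
  exists V : 'M[F]_(L, D), \rank V = L /\ (V *m E <= G)%MS.
Proof.
move=> hG.
have rE : \rank E = D by apply/eqP; apply: embed_mx_free.
have := mxrank_sum_cap G E; have := rank_leq_col (G + E)%MS => hK hsc.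
have hL : (L <= \rank (G :&: E))%N by lia.
pose Y : 'M[F]_(L, K) := pid_mx L *m row_base (G :&: E)%MS.
have rY : \rank Y = L by rewrite mxrankMfree ?row_base_free // rank_pid_mx.
have sY : (Y <= G :&: E)%MS by rewrite (submx_trans (submxMl _ _)) // eq_row_base.
have eY : Y *m E^T *m E = Y.
  have /submxP [M ->] := submx_trans sY (capmxSr _ _).
  by rewrite -!mulmxA (mulmxA E) embed_trmx mul1mx.
exists (Y *m E^T); rewrite eY; split; last exact: submx_trans sY (capmxSl _ _).
by rewrite -(mxrankMfree _ (embed_mx_free F cw)) eY.
Qed.

End LiftGL.

Lemma equiv_of_rank (F : fieldType) m n (V V' : 'M[F]_(m, n)) : \rank V = \rank V' ->
  exists C g, [/\ C \in unitmx, g \in unitmx & V' = C *m V *m g].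
Proof.
move=> e.
have pidV : pid_mx (\rank V) = invmx (col_ebase V) *m V *m invmx (row_ebase V).
  have cu := col_ebase_unit V; have ru := row_ebase_unit V.
  move: (mulmx_ebase V) cu ru; set c := col_ebase V; set r := row_ebase V => eV cu ru.
  by rewrite -{2}eV !mulmxA mulVmx // mul1mx mulmxK.
exists (col_ebase V' *m invmx (col_ebase V)), (invmx (row_ebase V) *m row_ebase V').
rewrite !unitmx_mul !unitmx_inv !col_ebase_unit !row_ebase_unit; split => //.
by rewrite -{1}(mulmx_ebase V') -e pidV !mulmxA.
Qed.

Section GlobalMatrix.
Variables (F : finFieldType) (K D L : nat) (w : {set 'I_K}) (v : 'M[F]_(L, D)).

Lemma globalU_embed : globalU w v = v *m embed_mx F D w.
Proof.
apply/matrixP => i j; rewrite !mxE big_mkcond /=; apply: eq_bigr => k _.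
by rewrite mxE; case: ifP => _; rewrite ?mulr1 ?mulr0.
Qed.

Lemma globalU_coord_space : (globalU w v <= coord_space F w)%MS.
Proof. by rewrite globalU_embed (submx_trans (submxMl _ _)) ?embed_mx_coord_space. Qed.

Lemma rank_globalU : #|w| = D -> \rank (globalU w v) = \rank v.
Proof. by move=> cw; rewrite globalU_embed mxrankMfree // embed_mx_free. Qed.

End GlobalMatrix.

Lemma card_fiber (F : finFieldType) s K N (G : 'M[F]_(s, K)) (a : 'M[F]_(s, N)) :
  row_free G ->
  (#|[set X : 'M[F]_(K, N) | G *m X == a]| * #|{: 'M[F]_(s, N)}| = #|{: 'M[F]_(K, N)}|)%N.
Proof.
case/row_freeP => G' hG'.
pose fib b := [set X : 'M[F]_(K, N) | G *m X == b].
have le b c : (#|fib b| <= #|fib c|)%N.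
  have inj : injective (fun X : 'M[F]_(K, N) => X + G' *m (c - b)) by move=> X1 X2 /addIr.
  rewrite -(card_imset _ inj); apply: subset_leq_card; apply/subsetP => Y.
  case/imsetP => X; rewrite !inE => /eqP hX ->.
  by rewrite mulmxDr mulmxA hG' mul1mx hX addrC subrK.
rewrite -[RHS]sum1_card (partition_big (fun X => G *m X) xpredT) //= mulnC -sum_nat_const.
apply: eq_bigr => b _; have -> : #|fib a| = #|fib b| by apply/eqP; rewrite eqn_leq !le.
by rewrite -sum1_card; apply: eq_bigl => X; rewrite inE.
Qed.

Lemma card_fiber_le (F : finFieldType) s K N (G : 'M[F]_(s, K)) (A : {set 'M[F]_(K, N)}) :
  row_free G -> {in A &, forall X X', G *m X = G *m X'} ->
  (#|A| * #|{: 'M[F]_(s, N)}| <= #|{: 'M[F]_(K, N)}|)%N.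
Proof.
move=> fG hA; have [->|[X0 X0A]] := set_0Vmem A; first by rewrite cards0.
rewrite -(card_fiber (G *m X0) fG) leq_mul2r; apply/orP; right.
by apply: subset_leq_card; apply/subsetP => X XA; rewrite inE (hA X X0).
Qed.

Section Entropy.
Variables (R : realType) (Om : finType) (P : {ffun Om -> R}).
Hypothesis P_ge0 : forall o, 0 <= P o.

Lemma prob_ge0 (E : pred Om) : 0 <= prob P E.
Proof. by apply: sumr_ge0 => o _. Qed.

Lemma entropyE (T : finType) (X : Om -> T) :
  entropy P X = - \sum_(t : T) prob P (fun o => X o == t) * log2 (prob P (fun o => X o == t)).
Proof.
rewrite /entropy -sumrN; apply: eq_bigr => t _ /=.
by case: eqP => [->|//]; rewrite mul0r oppr0.
Qed.

Lemma sum_prob (T : finType) (X : Om -> T) :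
  \sum_(t : T) prob P (fun o => X o == t) = \sum_(o : Om) P o.
Proof. by rewrite /prob (partition_big X xpredT). Qed.

Lemma ln2_gt0 : 0 < ln (2 : R).
Proof. by rewrite ln_gt0 // ltr1n. Qed.

Lemma log2_le (x y : R) : 0 < x -> x <= y -> log2 x <= log2 y.
Proof.
move=> x0 xy; apply: ler_wpM2r; first by rewrite invr_ge0 ltW // ln2_gt0.
by rewrite ler_ln // ?posrE // (lt_le_trans x0 xy).
Qed.

Lemma log2_lt (x y : R) : 0 < x -> x < y -> log2 x < log2 y.
Proof.
move=> x0 xy; rewrite /log2 ltr_pM2r ?invr_gt0 ?ln2_gt0 //.
by rewrite ltr_ln // ?posrE // (lt_trans x0 xy).
Qed.

Lemma entropy_lb (T : finType) (X : Om -> T) (c : R) :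
  \sum_(o : Om) P o = 1 -> 0 < c ->
  (forall t, prob P (fun o => X o == t) <= c) -> - log2 c <= entropy P X.
Proof.
move=> P1 c0 hc; rewrite entropyE -sumrN.
have -> : - log2 c = \sum_(t : T) prob P (fun o => X o == t) * (- log2 c).
  by rewrite -big_distrl /= sum_prob P1 mul1r.
apply: ler_sum => t _; set p := prob P _.
have [->|pn0] := eqVneq p 0; first by rewrite !mul0r oppr0.
have pp : 0 < p by rewrite lt0r pn0 prob_ge0.
rewrite -(mulrN p (log2 p)); apply: ler_wpM2l; first exact: ltW.
by rewrite lerN2; apply: log2_le => //; apply: hc.
Qed.

Section CondEntropy.
Variables (T S : finType) (X : Om -> T) (Y : Om -> S).
Let q t s := prob P (fun o => (X o, Y o) == (t, s)).
Let p s := prob P (fun o => Y o == s).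

Lemma prob_marg s : p s = \sum_(t : T) q t s.
Proof.
rewrite /p /q /prob (partition_big X xpredT) //=; apply: eq_bigr => t _.
by apply: eq_bigl => o; rewrite xpair_eqE andbC.
Qed.

Lemma prob_pair_le t s : q t s <= p s.
Proof. by rewrite prob_marg (bigD1 t) //= lerDl sumr_ge0 // => *; apply: prob_ge0. Qed.

Lemma cond_entropyE : cond_entropy P X Y =
  \sum_(s : S) \sum_(t : T) q t s * (log2 (p s) - log2 (q t s)).
Proof.
rewrite /cond_entropy !entropyE opprK addrC.
have -> : \sum_(u : T * S) prob P (fun o => (X o, Y o) == u)
    * log2 (prob P (fun o => (X o, Y o) == u)) = \sum_s \sum_t q t s * log2 (q t s).
  by rewrite exchange_big pair_bigA /=; apply: eq_bigr => -[t s].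
rewrite -sumrB; apply: eq_bigr => s _; rewrite -/(p s) {1}prob_marg big_distrl /= -sumrB.
by apply: eq_bigr => t _; rewrite mulrBr.
Qed.

Lemma cond_entropy_term_ge0 t s : 0 <= q t s * (log2 (p s) - log2 (q t s)).
Proof.
have [->|qn] := eqVneq (q t s) 0; first by rewrite mul0r.
have qp : 0 < q t s by rewrite lt0r qn prob_ge0.
apply: mulr_ge0; first exact: ltW.
by rewrite subr_ge0; apply: log2_le => //; apply: prob_pair_le.
Qed.

Lemma cond_entropy0 (phi : S -> T) : (forall o, P o != 0 -> X o = phi (Y o)) ->
  cond_entropy P X Y = 0.
Proof.
move=> hX; rewrite cond_entropyE big1 // => s _.
rewrite (bigD1 (phi s)) //= big1 ?addr0 => [|t tn].
  suff -> : q (phi s) s = p s by rewrite subrr mulr0.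
  apply/eqP; rewrite eq_le prob_pair_le prob_marg (bigD1 (phi s)) //= gerDl.
  rewrite big1 // => t tn; apply: big1 => o /eqP [eXt eYs].
  by apply/eqP; apply: contraNT tn => Po; rewrite -eXt hX // eYs.
rewrite [q t s]big1 ?mul0r // => o /eqP [eXt eYs].
apply/eqP; apply: contraNT tn => Po; by rewrite -eXt hX // eYs.
Qed.

Lemma cond_entropy0_full o : cond_entropy P X Y = 0 -> 0 < P o ->
  q (X o) (Y o) = p (Y o).
Proof.
move=> h0 Po.
have qp : 0 < q (X o) (Y o).
  apply: lt_le_trans Po _; rewrite /q /prob (bigD1 o) //= lerDl.
  by apply: sumr_ge0 => *.
have hsum : \sum_(s : S) \sum_(t : T) q t s * (log2 (p s) - log2 (q t s)) = 0.
  by rewrite -cond_entropyE.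
have outer_ge0 s : 0 <= \sum_(t : T) q t s * (log2 (p s) - log2 (q t s)).
  by apply: sumr_ge0 => t _; apply: cond_entropy_term_ge0.
have inner0 : \sum_(t : T) q t (Y o) * (log2 (p (Y o)) - log2 (q t (Y o))) = 0.
  exact: (psumr_eq0P (fun s _ => outer_ge0 s) hsum).
have /eqP : q (X o) (Y o) * (log2 (p (Y o)) - log2 (q (X o) (Y o))) = 0.
  exact: (psumr_eq0P (fun t _ => cond_entropy_term_ge0 t (Y o)) inner0).
rewrite mulf_eq0 gt_eqF //= subr_eq0 => /eqP e.
apply/eqP; rewrite eq_le prob_pair_le /= leNgt; apply/negP => lt.
by move: e => /eqP; rewrite gt_eqF // log2_lt.
Qed.

Lemma cond_entropy0_fun : cond_entropy P X Y = 0 ->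
  forall o1 o2, 0 < P o1 -> 0 < P o2 -> Y o1 = Y o2 -> X o1 = X o2.
Proof.
move=> h0 o1 o2 p1 p2 eY; apply/eqP/negP => /negP ne.
have e1 := cond_entropy0_full h0 p1; have e2 := cond_entropy0_full h0 p2.
rewrite -eY in e2.
have : q (X o1) (Y o1) + q (X o2) (Y o1) <= p (Y o1).
  rewrite prob_marg (bigD1 (X o1)) //= (bigD1 (X o2)) 1?eq_sym //= addrA lerDl.
  by apply: sumr_ge0 => *; apply: prob_ge0.
rewrite e1 e2 -[X in _ <= X]add0r lerD2r leNgt.
by rewrite -e1 (lt_le_trans p1) // /q /prob (bigD1 o1) //= lerDl sumr_ge0.
Qed.

End CondEntropy.
End Entropy.

Section ProductLaw.
Variables (R : numDomainType) (I T : finType) (kap : I -> T -> R).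

Definition prod_law : {ffun {ffun I -> T} -> R} :=
  [ffun rho : {ffun I -> T} => \prod_(i : I) kap i (rho i)].

Lemma prod_law_ge0 : (forall i t, 0 <= kap i t) -> forall rho, 0 <= prod_law rho.
Proof. by move=> kap_ge0 rho; rewrite ffunE prodr_ge0. Qed.

Lemma prod_law_supp rho i : prod_law rho != 0 -> kap i (rho i) != 0.
Proof. by apply: contra => /eqP h; rewrite ffunE (bigD1 i) //= h mul0r. Qed.

Hypothesis kap_sum1 : forall i, \sum_(t : T) kap i t = 1.

Lemma prod_law_sum1 : \sum_(rho : {ffun I -> T}) prod_law rho = 1.
Proof.
under eq_bigr => rho _ do rewrite ffunE.
by rewrite -(bigA_distr_bigA kap) /= big1.
Qed.

Lemma prod_law_marg i0 t0 :
  \sum_(rho : {ffun I -> T}) prod_law rho * (rho i0 == t0)%:R = kap i0 t0.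
Proof.
pose h i t := if i == i0 then kap i t * (t == t0)%:R else kap i t.
transitivity (\sum_(rho : {ffun I -> T}) \prod_(i : I) h i (rho i)).
  apply: eq_bigr => rho _; rewrite ffunE (bigD1 i0) //= [RHS](bigD1 i0) //=.
  by rewrite /h eqxx mulrAC; congr (_ * _); apply: eq_bigr => i /negbTE ->.
rewrite -(bigA_distr_bigA h) /= (bigD1 i0) //=.
rewrite [X in _ * X]big1 ?mulr1; last by move=> i /negbTE ni; rewrite /h ni kap_sum1.
rewrite /h eqxx (bigD1 t0) //= eqxx mulr1 big1 ?addr0 // => t /negbTE ->.
by rewrite mulr0.
Qed.

End ProductLaw.

Lemma sum_pair (V : nmodType) (A B : finType) (f : A * B -> V) :
  \sum_(p : A * B) f p = \sum_(a : A) \sum_(b : B) f (a, b).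
Proof. by rewrite pair_bigA; apply: eq_bigr => -[]. Qed.

Lemma sum_if_card (V : pzSemiRingType) (T : finType) (b : pred T) (a : V) :
  \sum_(x : T) (if b x then a else 0) = #|[set x | b x]|%:R * a.
Proof.
rewrite -sum1_card natr_sum big_distrl /= [RHS]big_mkcond /=; apply: eq_bigr => j _.
by rewrite inE; case: (b j); rewrite ?mul1r ?mul0r.
Qed.

Lemma sum_if_in (V : pzSemiRingType) (T : finType) (A : {set T}) (a : V) :
  \sum_(x : T) (if x \in A then a else 0) = #|A|%:R * a.
Proof. by rewrite sum_if_card; congr (_%:R * _); apply: eq_card => x; rewrite inE. Qed.

Lemma sum_unif (R : numFieldType) (T : finType) (A : {set T}) : (0 < #|A|)%N ->
  \sum_(x : T) (if x \in A then (#|A|%:R : R)^-1 else 0) = 1.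
Proof. by move=> h; rewrite sum_if_in mulfV // pnatr_eq0 -lt0n. Qed.

Lemma card_Wset_gt0 K D : (D <= K)%N -> (0 < #|Wset K D|)%N.
Proof.
move=> hDK; apply/card_gt0P.
exists [set widen_ord hDK i | i : 'I_D]; rewrite inE card_imset ?card_ord //.
by move=> i j /(congr1 val) /= e; apply: val_inj.
Qed.

Lemma card_VsetII_gt0 (F : finFieldType) L D : (L <= D)%N -> (0 < #|VsetII F L D|)%N.
Proof. by move=> hLD; apply/card_gt0P; exists (pid_mx L); rewrite inE rank_pid_mx. Qed.

Lemma card_mx_gt0 (F : finFieldType) m n : (0 < #|{: 'M[F]_(m, n)}|)%N.
Proof. by apply/card_gt0P; exists 0. Qed.

Section JointDistribution.
Variables (R : realType) (F : finFieldType) (K D L N : nat) (Rt : finType)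
  (PR : {ffun Rt -> R}).
Hypotheses (hLD : (L <= D)%N) (hDK : (D <= K)%N)
  (PR_ge0 : forall r, 0 <= PR r) (PR_sum1 : \sum_(r : Rt) PR r = 1).

Local Notation P := (@jointII R F K D L N Rt PR).
Local Notation Om := (Omega F K D L N Rt).

Definition pWVR (w : {set 'I_K}) (v : 'M[F]_(L, D)) (r : Rt) : R :=
  (if w \in Wset K D then (#|Wset K D|%:R)^-1 else 0)
   * (if v \in VsetII F L D then (#|VsetII F L D|%:R)^-1 else 0)
   * PR r.

Definition pX : R := (#|{: 'M[F]_(K, N)}|%:R)^-1.

Lemma jointE (o : Om) : P o = pWVR o.1.1.1 o.1.1.2 o.1.2 * pX.
Proof. by rewrite ffunE. Qed.

Lemma sum_Omega (f : Om -> R) : \sum_(o : Om) f o =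
  \sum_(w : {set 'I_K}) \sum_(v : 'M[F]_(L, D)) \sum_(r : Rt)
    \sum_(X : 'M[F]_(K, N)) f (w, v, r, X).
Proof. by rewrite !sum_pair. Qed.

Lemma pWVR_ge0 w v r : 0 <= pWVR w v r.
Proof.
by rewrite !mulr_ge0 //; case: ifP => // _; rewrite invr_ge0 ler0n.
Qed.

Lemma pX_gt0 : 0 < pX.
Proof. by rewrite invr_gt0 ltr0n card_mx_gt0. Qed.

Lemma joint_ge0 (o : Om) : 0 <= P o.
Proof. by rewrite jointE mulr_ge0 ?pWVR_ge0 // ltW // pX_gt0. Qed.

Lemma pWVR_supp w v r : pWVR w v r != 0 ->
  [/\ w \in Wset K D, v \in VsetII F L D & PR r != 0].
Proof.
rewrite /pWVR; case: (w \in Wset K D); last by rewrite !mul0r eqxx.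
case: (v \in VsetII F L D); last by rewrite mulr0 mul0r eqxx.
by move=> h; split => //; apply: contra h => /eqP ->; rewrite mulr0.
Qed.

Lemma sum_pWVR : \sum_(w : {set 'I_K}) \sum_(v : 'M[F]_(L, D)) \sum_(r : Rt) pWVR w v r = 1.
Proof.
under eq_bigr => w _ do under eq_bigr => v _ do rewrite -big_distrr /= PR_sum1 mulr1.
under eq_bigr => w _ do rewrite -big_distrr /= sum_unif ?card_VsetII_gt0 // mulr1.
by rewrite sum_unif // card_Wset_gt0.
Qed.

Lemma sum_pWVR_const (c : R) :
  \sum_(w : {set 'I_K}) \sum_(v : 'M[F]_(L, D)) \sum_(r : Rt) pWVR w v r * c = c.
Proof.
rewrite -[RHS]mul1r -sum_pWVR big_distrl /=; apply: eq_bigr => w _.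
by rewrite big_distrl; apply: eq_bigr => v _; rewrite big_distrl.
Qed.

Lemma joint_sum1 : \sum_(o : Om) P o = 1.
Proof.
rewrite sum_Omega -[RHS]sum_pWVR; apply: eq_bigr => w _; apply: eq_bigr => v _.
apply: eq_bigr => r _; under eq_bigr => X _ do rewrite jointE /=.
rewrite -big_distrr /= sumr_const -mulr_natr /pX mulVf ?mulr1 //.
by rewrite pnatr_eq0 -lt0n card_mx_gt0.
Qed.

Lemma prob_WVRX (g : {set 'I_K} -> 'M[F]_(L, D) -> Rt -> 'M[F]_(K, N) -> bool) :
  prob P (fun o => g o.1.1.1 o.1.1.2 o.1.2 o.2) =
  \sum_(w : {set 'I_K}) \sum_(v : 'M[F]_(L, D)) \sum_(r : Rt)
     pWVR w v r * (#|[set X | g w v r X]|%:R * pX).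
Proof.
rewrite /prob big_mkcond sum_Omega; apply: eq_bigr => w _; apply: eq_bigr => v _.
apply: eq_bigr => r _ /=; under eq_bigr => X _ do rewrite jointE /=.
by rewrite sum_if_card mulrCA.
Qed.

Lemma prob_WVR (g : {set 'I_K} -> 'M[F]_(L, D) -> Rt -> bool) :
  prob P (fun o => g o.1.1.1 o.1.1.2 o.1.2) =
  \sum_(w : {set 'I_K}) \sum_(v : 'M[F]_(L, D)) \sum_(r : Rt) pWVR w v r * (g w v r)%:R.
Proof.
rewrite (prob_WVRX (fun w v r (X : 'M[F]_(K, N)) => g w v r)).
apply: eq_bigr => w _; apply: eq_bigr => v _; apply: eq_bigr => r _.
case: (g w v r).
  rewrite (_ : [set _ | _] = setT) ?cardsT; last by apply/setP => X; rewrite !inE.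
  by rewrite /pX mulfV // pnatr_eq0 -lt0n card_mx_gt0.
by rewrite (_ : [set _ | _] = set0) ?cards0 ?mul0r.
Qed.

End JointDistribution.

Section Converse.
Variables (R : realType) (F : finFieldType) (K D L N : nat) (Rt Qt At : finType)
  (PR : {ffun Rt -> R})
  (qf : {set 'I_K} -> 'M[F]_(L, D) -> Rt -> Qt)
  (af : Qt -> 'M[F]_(K, N) -> At).
Hypotheses (hL : (1 <= L)%N) (hLD : (L <= D)%N) (hDK : (D <= K)%N).
Hypothesis protocol : is_JPLT_II PR qf af.

Local Notation P := (jointII F K D L N PR).
Local Notation r := (K - D + L)%N.

Let PR_ge0 : forall x, 0 <= PR x. Proof. by case: protocol. Qed.
Let PR_sum1 : \sum_(x : Rt) PR x = 1. Proof. by case: protocol. Qed.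

(* Joint privacy: a query that occurs for some demand also occurs, with positive
   probability, for every possible demand support w0. *)
Lemma privacy_witness (w w0 : {set 'I_K}) (v : 'M[F]_(L, D)) (x : Rt) :
  0 < pWVR PR w v x -> #|w0| = D ->
  exists v0 x0, 0 < pWVR PR w0 v0 x0 /\ qf w0 v0 x0 = qf w v x.
Proof.
case: protocol => _ _ _ privacy cpos cw0; set Q0 := qf w v x.
have hQ : 0 < prob P (fun o => rvQ qf o == Q0).
  have Pwvx : 0 < P (w, v, x, 0) by rewrite jointE mulr_gt0 ?pX_gt0.
  apply: lt_le_trans Pwvx _; rewrite /prob (bigD1 (w, v, x, 0)) ?eqxx //= lerDl.
  by apply: sumr_ge0 => o _; apply: joint_ge0.
suff /existsP [[v0 x0] /andP [c0 /eqP e0]] : [exists t : 'M[F]_(L, D) * Rt,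
    (0 < pWVR PR w0 t.1 t.2) && (qf w0 t.1 t.2 == Q0)] by exists v0, x0.
apply: contraT; rewrite negb_exists => /forallP none.
have joint0 : prob P (fun o => (rvW o == w0) && (rvQ qf o == Q0)) = 0.
  rewrite (prob_WVR N PR (fun w1 v1 x1 => (w1 == w0) && (qf w1 v1 x1 == Q0))).
  apply: big1 => w1 _; apply: big1 => v1 _; apply: big1 => x1 _.
  case: eqP => [->|]; last by rewrite mulr0.
  case: eqP => [eQ|]; last by rewrite mulr0.
  have : ~~ (0 < pWVR PR w0 v1 x1) by move: (none (v1, x1)); rewrite /= eQ eqxx andbT.
  by rewrite lt0r pWVR_ge0 // andbT negbK => /eqP ->; rewrite mul0r.
have hw0 : w0 \in Wset K D by rewrite inE cw0.
move: (privacy Q0 hQ w0 hw0); rewrite joint0 mul0r => /eqP.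
by rewrite eq_sym invr_eq0 pnatr_eq0 eqn0Ngt bin_gt0 hDK.
Qed.

(* Recoverability: on the support, the answer determines the demand U X. *)
Lemma answer_determines_demand (w : {set 'I_K}) (v : 'M[F]_(L, D)) (x : Rt)
    (X X' : 'M[F]_(K, N)) : 0 < pWVR PR w v x ->
  af (qf w v x) X = af (qf w v x) X' -> globalU w v *m X = globalU w v *m X'.
Proof.
case: protocol => _ _ recover _ cpos eA.
have pos X1 : 0 < P (w, v, x, X1) by rewrite jointE mulr_gt0 ?pX_gt0.
apply: (cond_entropy0_fun (joint_ge0 PR_ge0) recover (pos X) (pos X')).
by rewrite /rvA /rvQ /= eA.
Qed.

Lemma demand_rank (w : {set 'I_K}) (v : 'M[F]_(L, D)) (x : Rt) :
  0 < pWVR PR w v x -> \rank (globalU w v) = L.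
Proof.
move=> /gt_eqF/negbT/pWVR_supp [].
by rewrite !inE => /eqP cw /eqP rv _; rewrite rank_globalU.
Qed.

(* Each answer value has at most q^((K - r) N) preimages X for a fixed query:
   the demands compatible with the query span a space of dimension >= r,
   which the answer determines. *)
Lemma answer_fiber_bound (w : {set 'I_K}) (v : 'M[F]_(L, D)) (x : Rt) (a : At) :
  0 < pWVR PR w v x ->
  (#|[set X | af (qf w v x) X == a]| * #|F| ^ (r * N) <= #|F| ^ (K * N))%N.
Proof.
move=> cpos; set Q0 := qf w v x.
pose S := (\sum_(t : {set 'I_K} * 'M[F]_(L, D) * Rt |
   (0 < pWVR PR t.1.1 t.1.2 t.2)%R && (qf t.1.1 t.1.2 t.2 == Q0)) <<globalU t.1.1 t.1.2>>)%MS.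
have rS : (r <= \rank S)%N.
  apply: covering_rank_bound hL hDK _ => w0 cw0.
  have [v0 [x0 [c0 e0]]] := privacy_witness cpos cw0.
  rewrite -(demand_rank c0); apply: mxrankS; rewrite sub_capmx globalU_coord_space andbT.
  by apply: (sumsmx_sup (w0, v0, x0)); rewrite /= ?c0 ?e0 ?eqxx ?genmxE.
have fibS : {in [set X | af Q0 X == a] &,
    forall X X', row_base S *m X = row_base S *m X'}.
  move=> X X'; rewrite !inE => /eqP eX /eqP eX'.
  apply/eqP; rewrite -subr_eq0 -mulmxBr -sub_kermx eq_row_base.
  apply/sumsmx_subP => -[[w0 v0] x0] /andP [c0 /eqP e0].
  rewrite genmxE sub_kermx mulmxBr subr_eq0; apply/eqP.
  by apply: answer_determines_demand c0 _; rewrite e0 eX eX'.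
have := card_fiber_le (row_base_free S) fibS; rewrite !card_mx.
apply: leq_trans; rewrite leq_mul2l leq_pexp2l ?leq_mul2r ?rS ?orbT //.
by apply/card_gt0P; exists 0.
Qed.

Lemma prob_answer_le (a : At) :
  prob P (fun o => rvA qf af o == a) <= ((#|F| ^ (r * N))%:R)^-1.
Proof.
rewrite (prob_WVRX PR (fun w v x X => af (qf w v x) X == a)).
set c := ((#|F| ^ (r * N))%:R)^-1 : R.
rewrite -[X in _ <= X](sum_pWVR_const F hLD hDK PR_sum1).
apply: ler_sum => w _; apply: ler_sum => v _; apply: ler_sum => x _.
have [->|cn] := eqVneq (pWVR PR w v x) 0; first by rewrite !mul0r.
have cp : 0 < pWVR PR w v x by rewrite lt0r cn pWVR_ge0.
apply: ler_wpM2l; first exact: ltW.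
have q0 : (0 < #|F|)%N by apply/card_gt0P; exists 0.
rewrite /pX card_mx ler_pdivrMr ?ltr0n ?expn_gt0 ?q0 // mulrC.
rewrite ler_pdivlMr ?ltr0n ?expn_gt0 ?q0 //.
by rewrite -natrM ler_nat answer_fiber_bound.
Qed.

Lemma entropy_answer_lb : (r * N)%:R * log2 (#|F|%:R : R) <= entropy P (rvA qf af).
Proof.
have q0 : (0 < #|F|)%N by apply/card_gt0P; exists 0.
have qr : (0 : R) < (#|F| ^ (r * N))%:R by rewrite ltr0n expn_gt0 q0.
apply: le_trans (entropy_lb (joint_ge0 PR_ge0) (joint_sum1 F N hLD hDK PR_sum1) _ prob_answer_le).
  rewrite /log2 lnV ?posrE // mulNr opprK natrX lnXn ?ltr0n //.
  by rewrite -[ln _ *+ _]mulr_natl mulrA.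
by rewrite invr_gt0.
Qed.

End Converse.

Lemma converse (R : realType) (K D L : nat) :
  (1 <= L)%N -> (L <= D)%N -> (D <= K)%N ->
  forall (F : finFieldType) (N : nat), (0 < N)%N ->
  forall (Rt Qt At : finType) (PR : {ffun Rt -> R})
     (qf : {set 'I_K} -> 'M[F]_(L, D) -> Rt -> Qt) (af : Qt -> 'M[F]_(K, N) -> At),
  is_JPLT_II PR qf af -> rateII PR qf af <= (L%:R : R) / ((K - D + L)%N)%:R.
Proof.
move=> hL hLD hDK F N hN Rt Qt At PR qf af protocol.
have lq : 0 < log2 (#|F|%:R : R).
  by rewrite /log2 divr_gt0 ?ln2_gt0 // ln_gt0 // ltr1n card_finNzRing_gt1.
have hr : (0 < K - D + L)%N by lia.
have h0 : 0 < ((K - D + L) * N)%:R * log2 (#|F|%:R : R) by rewrite mulr_gt0 // ltr0n muln_gt0 hr.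
have -> : (L%:R : R) / ((K - D + L)%N)%:R =
    (L * N)%:R * log2 (#|F|%:R : R) / (((K - D + L) * N)%:R * log2 (#|F|%:R : R)).
  by rewrite !natrM; field; rewrite -natrD !pnatr_eq0 (gt_eqF lq) -!lt0n hr hN.
rewrite /rateII; apply: ler_wpM2l; first by apply: mulr_ge0; rewrite ?ler0n ?ltW.
have hA := entropy_answer_lb hL hLD hDK protocol.
by rewrite lef_pV2 ?posrE ?(lt_le_trans h0 hA).
Qed.

Section QuerySymmetry.
Variables (R : realType) (F : finFieldType) (K D L : nat).
Hypotheses (hLD : (L <= D)%N) (hDK : (D <= K)%N).
Local Notation r := (K - D + L)%N.

Definition full_queries : {set 'M[F]_(r, K)} := [set G | \rank G == r].

Definition unif_query (G : 'M[F]_(r, K)) : R :=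
  if G \in full_queries then (#|full_queries|%:R)^-1 else 0.

Definition n_demands (w : {set 'I_K}) (G : 'M[F]_(r, K)) : nat :=
  #|[set V : 'M[F]_(L, D) | (V \in VsetII F L D) && (globalU w V <= G)%MS]|.

(* Given G, the scheme picks the demand on w uniformly among the n_demands w G
   compatible ones; demand_mass w V is the resulting probability of V. *)
Definition demand_mass (w : {set 'I_K}) (V : 'M[F]_(L, D)) : R :=
  \sum_(G : 'M[F]_(r, K))
    (if (globalU w V <= G)%MS then unif_query G / (n_demands w G)%:R else 0).

Lemma card_full_queries_gt0 : (0 < #|full_queries|)%N.
Proof. by apply/card_gt0P; exists (pid_mx r); rewrite inE rank_pid_mx //; lia. Qed.

Lemma sum_unif_query : \sum_(G : 'M[F]_(r, K)) unif_query G = 1.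
Proof. exact/sum_unif/card_full_queries_gt0. Qed.

Lemma unif_query_ge0 G : 0 <= unif_query G.
Proof. by rewrite /unif_query; case: ifP => // _; rewrite invr_ge0 ler0n. Qed.

Variable w : {set 'I_K}.
Hypothesis cw : #|w| = D.
Local Notation lift g := (@lift_mx F K D w g).

Lemma n_demands_gt0 G : G \in full_queries -> (0 < n_demands w G)%N.
Proof.
rewrite inE => /eqP rG; have hG : (K - D + L <= \rank G)%N by rewrite rG.
have [V [rV sV]] := exists_embedded_rank cw (L := L) hG.
by apply/card_gt0P; exists V; rewrite !inE rV eqxx globalU_embed.
Qed.

Lemma globalU_mulmx (V : 'M[F]_(L, D)) g : globalU w (V *m g) = globalU w V *m lift g.
Proof. by rewrite !globalU_embed -!mulmxA embed_lift. Qed.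

Lemma n_demands_lift g G : g \in unitmx -> n_demands w (G *m lift g) = n_demands w G.
Proof.
move=> gu; have lu := lift_mx_unit cw gu.
have le h H : h \in unitmx -> (n_demands w H <= n_demands w (H *m lift h))%N.
  move=> hu; have lhu := lift_mx_unit cw hu.
  rewrite /n_demands -(card_imset _ (can_inj (mulmxK hu))); apply: subset_leq_card.
  apply/subsetP => V2 /imsetP [V]; rewrite !inE => /andP [rV sV] ->.
  by rewrite globalU_mulmx submxMfree ?mxrankMfree ?row_free_unit ?rV ?sV.
apply/eqP; rewrite eqn_leq le // andbT.
have := le (invmx g) (G *m lift g); rewrite unitmx_inv gu -mulmxA lift_mxM //.
by rewrite mulmxV // lift_mx1 mulmx1; apply.
Qed.

(* demand_mass is invariant under V |-> V g, since G |-> G (lift g) permutes the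
   full-rank queries preserving compatibility, and under V |-> C V, which does
   not change the row space of U. *)
Lemma demand_mass_mulr V g : g \in unitmx -> demand_mass w (V *m g) = demand_mass w V.
Proof.
move=> gu; have lu := lift_mx_unit cw gu.
rewrite /demand_mass (reindex_inj (can_inj (mulmxK lu))) /=; apply: eq_bigr => G _.
rewrite globalU_mulmx submxMfree ?row_free_unit // n_demands_lift //.
by rewrite /unif_query !inE mxrankMfree ?row_free_unit.
Qed.

Lemma demand_mass_mull V C : C \in unitmx -> demand_mass w (C *m V) = demand_mass w V.
Proof.
move=> Cu; apply: eq_bigr => G _.
by rewrite !globalU_embed -mulmxA (eqmxMfull _ (_ : row_full C)) ?row_full_unit.
Qed.

Lemma demand_mass_const V V' : \rank V = L -> \rank V' = L ->
  demand_mass w V' = demand_mass w V.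
Proof.
move=> rV rV'; have [C [g [Cu gu ->]]] := equiv_of_rank (etrans rV (esym rV')).
by rewrite demand_mass_mulr // demand_mass_mull.
Qed.

Lemma sum_compatible_demands G : \sum_(V : 'M[F]_(L, D))
    (if (V \in VsetII F L D) && (globalU w V <= G)%MS
     then unif_query G / (n_demands w G)%:R else 0) = unif_query G.
Proof.
rewrite sum_if_card -/(n_demands w G) /unif_query; case: ifP => hG; last by rewrite mul0r mulr0.
by rewrite mulrCA mulfV ?mulr1 // pnatr_eq0 -lt0n n_demands_gt0.
Qed.

Lemma sum_demand_mass :
  \sum_(V : 'M[F]_(L, D)) (if V \in VsetII F L D then demand_mass w V else 0) = 1.
Proof.
rewrite -sum_unif_query; transitivity (\sum_(V : 'M[F]_(L, D)) \sum_(G : 'M[F]_(r, K))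
   (if (V \in VsetII F L D) && (globalU w V <= G)%MS
    then unif_query G / (n_demands w G)%:R else 0)).
  by apply: eq_bigr => V _; case: ifP => hV; [apply: eq_bigr | rewrite big1].
by rewrite exchange_big /=; apply: eq_bigr => G _; apply: sum_compatible_demands.
Qed.

Lemma demand_mass_unif V :
  V \in VsetII F L D -> demand_mass w V = (#|VsetII F L D|%:R)^-1.
Proof.
move=> hV; have rV : \rank V = L by move: hV; rewrite inE => /eqP.
have nz : (#|VsetII F L D|%:R : R) != 0 by rewrite pnatr_eq0 -lt0n card_VsetII_gt0.
apply: (mulfI nz); rewrite mulfV // -[RHS]sum_demand_mass -sum_if_in.
by apply: eq_bigr => V' _; case: ifP => // /[!inE] /eqP rV'; rewrite (demand_mass_const rV rV').
Qed.

End QuerySymmetry.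

Section Achievability.
Variables (R : realType) (F : finFieldType) (K D L N : nat).
Hypotheses (hL : (1 <= L)%N) (hLD : (L <= D)%N) (hDK : (D <= K)%N) (hN : (0 < N)%N).
Local Notation r := (K - D + L)%N.
Local Notation Dem := ({set 'I_K} * 'M[F]_(L, D))%type.
Local Notation Qt := 'M[F]_(r, K).
Local Notation Rt := {ffun Dem -> Qt}.
Local Notation nV := (#|VsetII F L D|%:R : R).
Local Notation unif := (@unif_query R F K D L).

(* Conditional law of the query G given a valid demand (w, V): the joint law
   of (G, V) is then "G uniform, V uniform among the demands compatible with G".
   Invalid demands, which have probability zero, get the query 0. *)
Definition query_law (k : Dem) (G : Qt) : R :=
  if (k.1 \in Wset K D) && (k.2 \in VsetII F L D) then
    (if (globalU k.1 k.2 <= G)%MS then unif G / (n_demands k.1 G)%:R else 0) * nV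
  else (G == 0)%:R.

Lemma nV_neq0 : nV != 0.
Proof. by rewrite pnatr_eq0 -lt0n card_VsetII_gt0. Qed.

Lemma query_law_ge0 k G : 0 <= query_law k G.
Proof.
rewrite /query_law; case: ifP => _; last by case: (G == 0).
by rewrite mulr_ge0 //; case: ifP => // _; rewrite divr_ge0 ?unif_query_ge0.
Qed.

Lemma query_law_sum1 k : \sum_(G : Qt) query_law k G = 1.
Proof.
rewrite /query_law; case: andP => [[hw hv]|_]; last first.
  by rewrite (bigD1 0) //= eqxx big1 ?addr0 // => G /negbTE ->.
have cw : #|k.1| = D by move: hw; rewrite inE => /eqP.
rewrite -big_distrl /= -/(demand_mass R k.1 k.2).
by rewrite (demand_mass_unif R hLD hDK cw hv) mulVf // nV_neq0.
Qed.

Lemma query_law_supp w V G : w \in Wset K D -> V \in VsetII F L D ->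
  query_law (w, V) G != 0 -> (globalU w V <= G)%MS /\ G \in full_queries F K D L.
Proof.
move=> hw hv; rewrite /query_law /= hw hv /=; case: ifP => hs; last by rewrite mul0r eqxx.
by rewrite /unif_query; case: ifP => // _; rewrite !mul0r eqxx.
Qed.

(* The private randomness is a whole table rho of queries, one per demand,
   drawn independently from query_law; the query sent is rho (W, V). *)
Local Notation rand_law := (prod_law query_law).

Definition ach_query (w : {set 'I_K}) (V : 'M[F]_(L, D)) (rho : Rt) : Qt := rho (w, V).
Definition ach_answer (G : Qt) (X : 'M[F]_(K, N)) : 'M[F]_(r, N) := G *m X.
Local Notation P := (jointII F K D L N rand_law).

Lemma ach_supp w V rho : pWVR rand_law w V rho != 0 ->
  (globalU w V <= rho (w, V))%MS /\ rho (w, V) \in full_queries F K D L.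
Proof.
by case/pWVR_supp => hw hv /(prod_law_supp (w, V)); apply: query_law_supp.
Qed.

(* Recoverability: U X = U G^+ (G X), since the rows of U lie in those of G. *)
Lemma ach_recover : cond_entropy P (@rvZ F K D L N Rt)
  (fun o => (rvA ach_query ach_answer o, rvQ ach_query o, rvW o, rvV o)) = 0.
Proof.
pose decode (y : 'M[F]_(r, N) * Qt * {set 'I_K} * 'M[F]_(L, D)) :=
  globalU y.1.2 y.2 *m pinvmx y.1.1.2 *m y.1.1.1.
apply: (cond_entropy0 (joint_ge0 (prod_law_ge0 query_law_ge0)) (phi := decode)).
move=> [[[w V] rho] X] /=; rewrite jointE /= => hP.
have hc : pWVR rand_law w V rho != 0 by apply: contra hP => /eqP ->; rewrite mul0r.
have [hs _] := ach_supp hc.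
by rewrite /decode /rvZ /rvA /rvQ /ach_answer /ach_query /= mulmxA mulmxKpV.
Qed.

Lemma law_W_query w G0 : \sum_(V : 'M[F]_(L, D)) \sum_(rho : Rt)
    pWVR rand_law w V rho * (rho (w, V) == G0)%:R =
  (if w \in Wset K D then (#|Wset K D|%:R)^-1 else 0) * unif G0.
Proof.
case: ifP => hw; last first.
  by rewrite mul0r big1 // => V _; rewrite big1 // => rho _; rewrite /pWVR hw !mul0r.
have cw : #|w| = D by move: hw; rewrite inE => /eqP.
transitivity (\sum_(V : 'M[F]_(L, D)) (#|Wset K D|%:R)^-1 *
    ((if V \in VsetII F L D then nV^-1 else 0) * query_law (w, V) G0)).
  apply: eq_bigr => V _; rewrite -(prod_law_marg query_law_sum1) !big_distrr /=.
  by apply: eq_bigr => rho _; rewrite /pWVR hw !mulrA.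
rewrite -big_distrr /=; congr (_ * _).
rewrite -(sum_compatible_demands R cw G0); apply: eq_bigr => V _.
rewrite /query_law /= hw; case: (V \in VsetII F L D); last by rewrite mul0r.
by rewrite /= mulrC -mulrA; case: ifP; rewrite ?mul0r // mulfV ?nV_neq0 // mulr1.
Qed.

Lemma prob_W_query w0 G0 : prob P (fun o => (rvW o == w0) && (rvQ ach_query o == G0)) =
  (if w0 \in Wset K D then (#|Wset K D|%:R)^-1 else 0) * unif G0.
Proof.
rewrite (prob_WVR N rand_law (fun w V rho => (w == w0) && (rho (w, V) == G0))).
rewrite (bigD1 w0) //= [X in _ + X]big1 ?addr0; last first.
  by move=> w /negbTE wn; apply: big1 => V _; apply: big1 => rho _; rewrite wn mulr0.
by rewrite -law_W_query; apply: eq_bigr => V _; apply: eq_bigr => rho _; rewrite eqxx.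
Qed.

Lemma prob_query G0 : prob P (fun o => rvQ ach_query o == G0) = unif G0.
Proof.
rewrite (prob_WVR N rand_law (fun w V rho => rho (w, V) == G0)).
under eq_bigr => w _ do rewrite law_W_query.
by rewrite -big_distrl /= sum_unif ?mul1r // card_Wset_gt0.
Qed.

Lemma ach_privacy (Q0 : Qt) : 0 < prob P (fun o => rvQ ach_query o == Q0) ->
  forall w0 : {set 'I_K}, w0 \in Wset K D ->
  prob P (fun o => (rvW o == w0) && (rvQ ach_query o == Q0))
    / prob P (fun o => rvQ ach_query o == Q0) = ('C(K, D)%:R)^-1.
Proof.
rewrite prob_query => hQ w0 hw0.
by rewrite prob_W_query hw0 mulfK ?gt_eqF // /Wset card_draws card_ord.
Qed.

(* The answer G X is uniform, since G is row-free and X is uniform. *)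
Lemma prob_answer a : prob P (fun o => rvA ach_query ach_answer o == a) =
  (#|{: 'M[F]_(r, N)}|%:R)^-1.
Proof.
rewrite (prob_WVRX rand_law (fun w V rho X => rho (w, V) *m X == a)).
set c := (#|{: 'M[F]_(r, N)}|%:R : R)^-1.
rewrite -[RHS](sum_pWVR_const F hLD hDK (prod_law_sum1 query_law_sum1)).
apply: eq_bigr => w _; apply: eq_bigr => V _; apply: eq_bigr => rho _ /=.
have [->|hc] := eqVneq (pWVR rand_law w V rho) 0; first by rewrite !mul0r.
have [_] := ach_supp hc; rewrite inE => rf.
have e := card_fiber a rf.
have nz : (#|[set X | rho (w, V) *m X == a]|%:R : R) != 0.
  by rewrite pnatr_eq0 -lt0n; move: (card_mx_gt0 F K N); rewrite -e muln_gt0 => /andP [].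
by congr (_ * _); rewrite /pX -e natrM invfM mulrA mulfV ?mul1r.
Qed.

Lemma entropy_answer : entropy P (rvA ach_query ach_answer) = (r * N)%:R * log2 (#|F|%:R : R).
Proof.
rewrite entropyE; under eq_bigr => a _ do rewrite prob_answer.
have np : (0 : R) < #|{: 'M[F]_(r, N)}|%:R by rewrite ltr0n card_mx_gt0.
rewrite sumr_const -[(_ * _) *+ _]mulr_natl mulrA (_ : #|xpredT| = #|{: 'M[F]_(r, N)}|) //.
rewrite mulfV ?gt_eqF //.
rewrite mul1r /log2 lnV ?posrE // mulNr opprK card_mx natrX lnXn ?ltr0n ?card_gt0; last first.
  by apply/card_gt0P; exists 0.
by rewrite -[ln _ *+ _]mulr_natl mulrA.
Qed.

Lemma ach_protocol : is_JPLT_II rand_law ach_query ach_answer.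
Proof.
split; [exact: prod_law_ge0 query_law_ge0 | exact: prod_law_sum1 query_law_sum1 |
        exact: ach_recover | exact: ach_privacy].
Qed.

Lemma ach_rate : rateII rand_law ach_query ach_answer = (L%:R : R) / r%:R.
Proof.
have lq : 0 < log2 (#|F|%:R : R).
  by rewrite /log2 divr_gt0 ?ln2_gt0 // ln_gt0 // ltr1n card_finNzRing_gt1.
have hr : (0 < r)%N by lia.
rewrite /rateII entropy_answer !natrM; field.
by rewrite -natrD !pnatr_eq0 (gt_eqF lq) -!lt0n hr hN.
Qed.

End Achievability.

Lemma achievability (R : realType) (K D L : nat) :
  (1 <= L)%N -> (L <= D)%N -> (D <= K)%N ->
  forall (F : finFieldType) (N : nat), (0 < N)%N ->
  exists (Rt Qt At : finType) (PR : {ffun Rt -> R})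
    (qf : {set 'I_K} -> 'M[F]_(L, D) -> Rt -> Qt) (af : Qt -> 'M[F]_(K, N) -> At),
  is_JPLT_II PR qf af /\ rateII PR qf af = (L%:R : R) / ((K - D + L)%N)%:R.
Proof.
move=> hL hLD hDK F N hN.
exists _, _, _, (prod_law (@query_law R F K D L)), (@ach_query F K D L), (@ach_answer F K D L N).
by split; [apply: ach_protocol | apply: ach_rate].
Qed.

Theorem theorem2 (R : realType) (K D L : nat) :
  (1 <= L)%N -> (L <= D)%N -> (D <= K)%N ->
  (* converse: every JPLT-II protocol, any field, any N >= 1 *)
  (forall (F : finFieldType) (N : nat), (0 < N)%N ->
   forall (Rt Qt At : finType) (PR : {ffun Rt -> R})
     (qf : {set 'I_K} -> 'M[F]_(L, D) -> Rt -> Qt)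
     (af : Qt -> 'M[F]_(K, N) -> At),
     is_JPLT_II PR qf af ->
     rateII PR qf af <= (L%:R : R) / ((K - D + L)%N)%:R)
  /\
  (* achievability: for every finite field F_q with q >= K *)
  (forall (F : finFieldType), (K <= #|F|)%N ->
   forall (N : nat), (0 < N)%N ->
   exists (Rt Qt At : finType) (PR : {ffun Rt -> R})
     (qf : {set 'I_K} -> 'M[F]_(L, D) -> Rt -> Qt)
     (af : Qt -> 'M[F]_(K, N) -> At),
     is_JPLT_II PR qf af /\
     rateII PR qf af = (L%:R : R) / ((K - D + L)%N)%:R).
Proof.
move=> hL hLD hDK; split; first exact: converse.
by move=> F _; apply: achievability.
Qed.
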